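(* $\mathfrak{L}(\mathbb{Z}^2) \subsetneq \mathfrak{L}(\mathbf{H})$.
   Context: For a group $G$ with identity $e$, a $G$-automaton is a tuple $(Q,\Sigma,G,\delta,q_0,Q_a)$ where $Q$ is a finite set of states, $\Sigma$ a finite input alphabet, $q_0\in Q$ the initial state, $Q_a\subseteq Q$ the accepting states, and $\delta$ assigns to each $(q,\sigma)\in Q\times(\Sigma\cup\{\varepsilon\})$ a finite set of pairs $(q',m)\in Q\times G$. The register holds an element of $G$, initially $e$; using a transition $(q',m)\in\delta(q,\sigma)$ the automaton reads $\sigma$ (or nothing), moves to $q'$ and replaces the register content $x$ by $xm$. A word is accepted if some computation reads it entirely and ends in an accepting state with register equal to $e$. $\mathfrak{L}(G)$ is the class of languages recognized by $G$-automata. $\mathbb{Z}^2$ is the free Abelian group of rank 2. $\mathbf{H}$ is the discrete Heisenberg group $\langle a,b\mid ab=bac,\ ac=ca,\ bc=cb\rangle$ with $c=a^{-1}b^{-1}ab$, equivalently the group of $3\times3$ upper unitriangular integer matrices. *)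

From mathcomp Require Import all_boot all_order all_algebra.
Set Implicit Arguments. Unset Strict Implicit. Unset Printing Implicit Defensive.
Import GRing.Theory Num.Theory.
Local Open Scope ring_scope.

(* The transition function assigns to each
   state q and each letter (Some a) or the empty word (None) a finite set (here: a finite
   list) of pairs (q', m) in Q x G. *)
Record gautomaton (G : eqType) (S : finType) := GAutomaton {
  gstate : finType;
  gdelta : gstate -> option S -> seq (gstate * G);
  ginit  : gstate;
  gacc   : {set gstate}
}.

Section Computations.
Variables (G : eqType) (mul : G -> G -> G) (S : finType) (A : gautomaton G S).

Inductive gcomp : gstate A -> G -> seq S -> gstate A -> G -> Prop :=
| gcomp_nil q x : gcomp q x [::] q x
| gcomp_eps q x q1 m w q2 y :
    (q1, m) \in gdelta q None -> gcomp q1 (mul x m) w q2 y -> gcomp q x w q2 y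
| gcomp_sym q x a q1 m w q2 y :
    (q1, m) \in gdelta q (Some a) -> gcomp q1 (mul x m) w q2 y -> gcomp q x (a :: w) q2 y.

End Computations.

Definition gaccepts (G : eqType) (mul : G -> G -> G) (e : G) (S : finType)
    (A : gautomaton G S) (w : seq S) : Prop :=
  exists2 q, q \in gacc A & gcomp mul (ginit A) e w q e.

Definition in_LG (G : eqType) (mul : G -> G -> G) (e : G) (S : finType)
    (L : seq S -> Prop) : Prop :=
  exists A : gautomaton G S, forall w, L w <-> gaccepts mul e A w.

Definition Z2 : eqType := (int * int)%type.
Definition Z2mul (x y : Z2) : Z2 := (x.1 + y.1, x.2 + y.2).
Definition Z2one : Z2 := (0, 0).

(* Heisenberg group: upper unitriangular 3x3 integer matrices
     [[1, a, c], [0, 1, b], [0, 0, 1]]  encoded as ((a, b), c).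
   Matrix product: ((a,b),c) * ((a',b'),c') = ((a+a', b+b'), c + c' + a*b'). *)
Definition Heis : eqType := ((int * int) * int)%type.
Definition Hmul (x y : Heis) : Heis :=
  ((x.1.1 + y.1.1, x.1.2 + y.1.2), x.2 + y.2 + x.1.1 * y.1.2).
Definition Hone : Heis := ((0, 0), 0).

From HB Require Import structures.
From mathcomp Require Import all_boot all_order all_algebra zify ring.
Set Implicit Arguments. Unset Strict Implicit. Unset Printing Implicit Defensive.
Import GRing.Theory.

(* Z^2 embeds in H as the subgroup generated by b and c = [a, b], and pushing the
   register values of an automaton along an injective morphism preserves the
   recognized language.  For strictness, take the words u c^n with u over {a, b} and
   n the number of pairs of positions of u carrying a then b.  Reading a and b as
   the generators of H, n is the central coordinate of the product of the letters
   of u, so an H-automaton can compute it and then erase the register coordinate by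
   coordinate.  Over an abelian group, on the other hand, two consecutive loops of a
   computation at the same state can be exchanged without changing the final
   register.  Reading (a b^0) (a b^1) ... (a b^(r-1)) c^n with r = 2 |Q|, three
   block boundaries are reached in the same state, and exchanging the two runs of
   blocks between them changes the number of ab-pairs, because later blocks are
   richer in b. *)

Lemma pigeonhole_triple (T : finType) (g : nat -> T) N : 2 * #|T| < N ->
  exists i j k, [/\ i < j, j < k, k < N, g j = g i & g k = g i].
Proof.
move=> ltTN.
(* If no value of g were taken three times, t |-> (g t, first t) would be injective. *)
pose first (t : 'I_N) := [forall s : 'I_N, (s < t) ==> (g s != g t)].
have /injectivePn[t1 [t2 neq_t12 [eq_g eq_first]]] :
    ~~ injectiveb (fun t : 'I_N => (g t, first t)).
  apply: contraTN ltTN => /injectiveP/leq_card.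
  by rewrite card_prod card_bool card_ord mulnC -leqNgt.
wlog lt_t12 : t1 t2 neq_t12 eq_g eq_first / t1 < t2.
  move=> wlog_lt; case: (ltngtP t1 t2) => [|lt_t21|/val_inj eq_t12].
  - exact: wlog_lt.
  - by apply: (wlog_lt t2 t1); rewrite // eq_sym.
  - by rewrite eq_t12 eqxx in neq_t12.
case first_t1: (first t1) eq_first => eq_first.
  by move/esym/forallP/(_ t1): eq_first; rewrite lt_t12 eq_g eqxx.
move/forallPn: first_t1 => [s]; rewrite negb_imply negbK => /andP[lt_st1 /eqP eq_gs].
by exists s, t1, t2; split; rewrite // -?eq_g.
Qed.

Section Runs.
Variables (G : eqType) (mul : G -> G -> G) (S : finType) (A : gautomaton G S).
Local Notation gc := (@gcomp G mul S A).
Local Notation run c w c' := (gc c.1 c.2 w c'.1 c'.2).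

Lemma gcomp_cat q x w1 q1 x1 w2 q2 x2 :
  gc q x w1 q1 x1 -> gc q1 x1 w2 q2 x2 ->
  gc q x (w1 ++ w2) q2 x2.
Proof.
elim=> // [q' x' q'' m w q3 y Hm _ IH | q' x' a q'' m w q3 y Hm _ IH] H2.
- exact: (gcomp_eps Hm (IH H2)).
- exact: (gcomp_sym Hm (IH H2)).
Qed.

Lemma gcomp_split q x w1 w2 q2 y : gc q x (w1 ++ w2) q2 y ->
  exists q1 x1, gc q x w1 q1 x1 /\ gc q1 x1 w2 q2 y.
Proof.
move Ew: (w1 ++ w2) => w H; elim: H w1 Ew => {q x w q2 y}
  [q x | q x q' m w q2 y Hm _ IH | q x a q' m w q2 y Hm Hw IH] w1.
- by case: w1 => // /= ->; exists q, x; split; apply: gcomp_nil.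
- by move=> /IH[q1 [x1 [H1 H2]]]; exists q1, x1; split; first exact: gcomp_eps Hm H1.
- case: w1 => [|a' w1] /=.
    by move=> ->; exists q, x; split; [apply: gcomp_nil | apply: gcomp_sym Hm Hw].
  by case=> -> /IH[q1 [x1 [H1 H2]]]; exists q1, x1; split; first exact: gcomp_sym Hm H1.
Qed.

Lemma gcomp_trace ws rest q x q' y :
  gc q x (flatten ws ++ rest) q' y ->
  exists c : nat -> gstate A * G, [/\ c 0 = (q, x),
    forall t, t < size ws -> run (c t) (nth [::] ws t) (c t.+1)
    & run (c (size ws)) rest (q', y)].
Proof.
elim: ws q x => [|w ws IH] q x /=; first by exists (fun=> (q, x)).
rewrite -catA => /gcomp_split[q1 [x1 [Hw /IH[c [c0 Hc Hrest]]]]].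
exists (fun t => if t is t'.+1 then c t' else (q, x)); split => // -[|t] /= lt_t.
- by rewrite c0.
- exact: Hc.
Qed.

Lemma gcomp_trace_slice ws (c : nat -> gstate A * G) :
  (forall t, t < size ws -> run (c t) (nth [::] ws t) (c t.+1)) ->
  forall d i, i + d <= size ws -> run (c i) (flatten (take d (drop i ws))) (c (i + d)).
Proof.
move=> Hc; elim=> [|d IH] i le_size; first by rewrite take0 addn0; apply: gcomp_nil.
rewrite (drop_nth [::]) /=; last by lia.
by rewrite addnS -addSn; apply: gcomp_cat (Hc _ _) (IH _ _); lia.
Qed.

End Runs.

Section AbelianRuns.
Variables (V : zmodType) (S : finType) (A : gautomaton V S).
Local Notation gc := (@gcomp V +%R S A).

Section Translation.
Local Open Scope ring_scope.

Lemma gcomp_addl q x w q' y d : gc q x w q' y -> gc q (d + x) w q' (d + y).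
Proof.
elim=> [q0 x0 | q0 x0 q1 m w0 q2 y0 Hm _ IH | q0 x0 a q1 m w0 q2 y0 Hm _ IH].
- exact: gcomp_nil.
- by apply: (gcomp_eps Hm); rewrite -addrA.
- by apply: (gcomp_sym Hm); rewrite -addrA.
Qed.

Lemma gcomp_swap_loops q0 x0 w0 p x1 w1 x2 w2 x3 w3 q x4 :
  gc q0 x0 w0 p x1 -> gc p x1 w1 p x2 ->
  gc p x2 w2 p x3 -> gc p x3 w3 q x4 ->
  gc q0 x0 (w0 ++ w2 ++ w1 ++ w3) q x4.
Proof.
move=> H0 H1 H2 H3; apply: (gcomp_cat H0).
have /(gcomp_addl (x1 - x2)) H2' := H2; rewrite subrK in H2'.
apply: (gcomp_cat H2'); apply: gcomp_cat H3.
have := gcomp_addl (x3 - x2) H1.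
by rewrite subrK addrAC [x3 + x1]addrC -addrAC.
Qed.

End Translation.

Lemma gaccepts_swap (I : Type) (B : I -> seq S) ts rest :
  2 * #|gstate A| <= size ts ->
  gaccepts +%R 0%R A (flatten (map B ts) ++ rest) ->
  exists ts1 ts2 ts3 ts4, [/\ ts = ts1 ++ ts2 ++ ts3 ++ ts4, 0 < size ts2, 0 < size ts3
    & gaccepts +%R 0%R A (flatten (map B (ts1 ++ ts3 ++ ts2 ++ ts4)) ++ rest)].
Proof.
move=> le_size [qf acc_qf /gcomp_trace[c [c0 Hc Hrest]]].
rewrite size_map in Hc Hrest.
have [|i [j [k [lt_ij lt_jk lt_k cj ck]]]] := pigeonhole_triple (fun t => (c t).1) (N := (size ts).+1).
  by rewrite ltnS.
have slice d i0 : i0 + d <= size ts ->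
    gc (c i0).1 (c i0).2 (flatten (map B (take d (drop i0 ts)))) (c (i0 + d)).1 (c (i0 + d)).2.
  by move=> le_d; rewrite map_take map_drop; apply: gcomp_trace_slice; rewrite ?size_map.
exists (take i ts), (take (j - i) (drop i ts)), (take (k - j) (drop j ts)), (drop k ts).
split.
- have drop_j : drop j ts = drop (j - i) (drop i ts) by rewrite drop_drop subnK // ltnW.
  have drop_k : drop k ts = drop (k - j) (drop j ts) by rewrite drop_drop subnK // ltnW.
  by rewrite drop_k cat_take_drop drop_j !cat_take_drop.
- by rewrite size_takel ?size_drop; lia.
- by rewrite size_takel ?size_drop; lia.
exists qf => //; rewrite !map_cat !flatten_cat -!catA.
have := slice i 0; rewrite drop0 c0 add0n => X.
have := slice (j - i) i; rewrite subnKC ?cj => [Y|]; last exact: ltnW.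
have := slice (k - j) j; rewrite subnKC ?cj ?ck => [Z|]; last exact: ltnW.
have := slice (size ts - k) k; rewrite subnKC // take_oversize ?size_drop // ck => T.
apply: gcomp_swap_loops (X _) (Y _) (Z _) (gcomp_cat (T _) Hrest); lia.
Qed.

End AbelianRuns.

Section InjectiveMorphism.
Variables (G G' : eqType) (mul : G -> G -> G) (mul' : G' -> G' -> G') (e : G) (e' : G').
Variables (f : G -> G') (S : finType).
Hypotheses (fM : {morph f : x y / mul x y >-> mul' x y}) (f_inj : injective f) (f1 : f e = e').

Definition map_gautomaton (A : gautomaton G S) : gautomaton G' S :=
  {| gstate := gstate A;
     gdelta := fun q l => [seq (p.1, f p.2) | p <- gdelta q l];
     ginit := ginit A;
     gacc := gacc A |}.

Variable A : gautomaton G S.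
Local Notation fA := (map_gautomaton A).

Lemma gcomp_map q x w q' y :
  gcomp mul q x w q' y -> @gcomp G' mul' S fA q (f x) w q' (f y).
Proof.
elim=> [q0 x0 | q0 x0 q1 m w0 q2 y0 Hm _ IH | q0 x0 a q1 m w0 q2 y0 Hm _ IH].
- exact: gcomp_nil.
- by apply: (gcomp_eps (A := fA) (q1 := q1) (m := f m)); [apply: map_f Hm | rewrite -fM].
- by apply: (gcomp_sym (A := fA) (q1 := q1) (m := f m)); [apply: map_f Hm | rewrite -fM].
Qed.

Lemma gcomp_unmap q x w q' y' :
  @gcomp G' mul' S fA q (f x) w q' y' -> exists2 y, y' = f y & gcomp mul q x w q' y.
Proof.
move Ex': (f x) => x' H; elim: H x Ex' => {q x' w q' y'}
  [q0 x0 | q0 x0 q1 m w0 q2 y0 Hm _ IH | q0 x0 a q1 m w0 q2 y0 Hm _ IH] x Ex.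
- by exists x => //; apply: gcomp_nil.
- case/mapP: Hm IH => -[q1' m'] Hm [-> ->] IH.
  have [|y -> H] := IH (mul x m'); first by rewrite fM Ex.
  by exists y => //; apply: gcomp_eps Hm H.
- case/mapP: Hm IH => -[q1' m'] Hm [-> ->] IH.
  have [|y -> H] := IH (mul x m'); first by rewrite fM Ex.
  by exists y => //; apply: gcomp_sym Hm H.
Qed.

Lemma gaccepts_map w : gaccepts mul' e' fA w <-> gaccepts mul e A w.
Proof.
split=> -[q acc_q H]; exists q => //; last by rewrite -f1; apply: gcomp_map.
by move: H; rewrite -f1 => /gcomp_unmap[y /f_inj <-].
Qed.

End InjectiveMorphism.

Lemma in_LG_inj_morph (G G' : eqType) (mul : G -> G -> G) (mul' : G' -> G' -> G')
    (e : G) (e' : G') (f : G -> G') (S : finType) (L : seq S -> Prop) :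
  {morph f : x y / mul x y >-> mul' x y} -> injective f -> f e = e' ->
  in_LG mul e L -> in_LG mul' e' L.
Proof.
move=> fM f_inj f1 [A recA]; exists (map_gautomaton f A) => w.
by rewrite recA (gaccepts_map fM f_inj f1).
Qed.

Notation letter := (option bool).
Notation ltrA := (Some true).
Notation ltrB := (Some false).
Notation ltrC := (@None bool).

Definition na (u : seq letter) : nat := count_mem ltrA u.
Definition nb (u : seq letter) : nat := count_mem ltrB u.

Fixpoint nab (u : seq letter) : nat :=
  if u is l :: u' then (l == ltrA) * nb u' + nab u' else 0.

Definition Lsep (w : seq letter) : Prop :=
  exists2 u, all isSome u & w = u ++ nseq (nab u) ltrC.

Lemma nab_cat u v : nab (u ++ v) = nab u + nab v + na u * nb v.
Proof.
elim: u => [|l u IH] /=; first by rewrite mul0n addn0.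
by rewrite IH /na /nb !count_cat; case: l => [[]|] /=; lia.
Qed.

Lemma nab_swap x y z s :
  nab (x ++ y ++ z ++ s) + na z * nb y = nab (x ++ z ++ y ++ s) + na y * nb z.
Proof. rewrite !nab_cat /na /nb !count_cat; nia. Qed.

Lemma Lsep_cat_nseqC u m : all isSome u -> Lsep (u ++ nseq m ltrC) -> m = nab u.
Proof.
move=> u_ab [v v_ab E].
have Euv : u = v.
  move/(congr1 (filter isSome)): E.
  by rewrite !filter_cat !filter_nseq /= !cats0 (elimT all_filterP u_ab) (elimT all_filterP v_ab).
by move/(congr1 size): E; rewrite !size_cat !size_nseq Euv => /addnI.
Qed.

Definition block (t : nat) : seq letter := ltrA :: nseq t ltrB.

Lemma all_isSome_blocks ts : all isSome (flatten (map block ts)).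
Proof. by elim: ts => //= t ts IH; rewrite all_cat IH /= all_nseq orbT. Qed.

Lemma na_blocks ts : na (flatten (map block ts)) = size ts.
Proof. by elim: ts => //= t ts IH; rewrite /na count_cat /= count_nseq mul0n -/(na _) IH. Qed.

Lemma nb_blocks ts : nb (flatten (map block ts)) = sumn ts.
Proof. by elim: ts => //= t ts IH; rewrite /nb count_cat /= count_nseq mul1n -/(nb _) IH. Qed.

Lemma sumn_allrel_ltn (s1 s2 : seq nat) :
  allrel ltn s1 s2 -> sumn s1 * size s2 + size s1 * size s2 <= size s1 * sumn s2.
Proof.
elim: s1 => [|t s1 IH] //=; rewrite allrel_consl => /andP[lt_t /IH le_s1].
have : t.+1 * size s2 <= sumn s2.
  elim: s2 lt_t {le_s1 IH} => [|t' s2 IHs] /=; first by rewrite muln0.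
  by case/andP=> lt_tt' /IHs; rewrite mulnS; lia.
nia.
Qed.

Lemma Lsep_notin_LG_zmod (V : zmodType) : ~ in_LG (+%R : V -> V -> V) 0%R Lsep.
Proof.
case=> A recA.
pose ts := iota 0 (2 * #|gstate A|).
pose u := flatten (map block ts).
have : gaccepts +%R 0%R A (u ++ nseq (nab u) ltrC) by apply/recA; exists u; rewrite ?all_isSome_blocks.
case/gaccepts_swap => [|ts1 [ts2 [ts3 [ts4 [Ets pos2 pos3 /recA]]]]]; first by rewrite size_iota.
move=> /(Lsep_cat_nseqC (all_isSome_blocks _)); rewrite /u Ets !map_cat !flatten_cat => E.
have lt23 : allrel ltn ts2 ts3.
  have := iota_ltn_sorted 0 (2 * #|gstate A|); rewrite -/ts Ets sorted_pairwise; last exact: ltn_trans.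
  by rewrite !pairwise_cat => /and3P[_ _ /andP[+ _]]; rewrite allrel_catr => /andP[].
have := nab_swap (flatten (map block ts1)) (flatten (map block ts2))
  (flatten (map block ts3)) (flatten (map block ts4)).
rewrite E !na_blocks !nb_blocks; have := sumn_allrel_ltn lt23; nia.
Qed.

Inductive hstate := Scan | EraseA | EraseB.

Definition hstate_code (q : hstate) : option bool :=
  match q with Scan => None | EraseA => Some true | EraseB => Some false end.
Definition hstate_decode (o : option bool) : hstate :=
  match o with None => Scan | Some true => EraseA | Some false => EraseB end.
Lemma hstate_codeK : cancel hstate_code hstate_decode. Proof. by case. Qed.
HB.instance Definition _ := Finite.copy hstate (can_type hstate_codeK).

Section Heisenberg.
Local Open Scope ring_scope.

Lemma HmulA : associative Hmul.
Proof. by move=> x y z; rewrite /Hmul /=; congr ((_, _), _); ring. Qed.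

Lemma Hmulg1 : right_id Hone Hmul.
Proof. by case=> [[a b] c]; rewrite /Hmul /= !addr0 mulr0 addr0. Qed.

Definition Z2_to_Heis (x : Z2) : Heis := ((0, x.1), x.2).

Lemma Z2_to_HeisM : {morph Z2_to_Heis : x y / Z2mul x y >-> Hmul x y}.
Proof. by move=> x y; rewrite /Z2_to_Heis /Z2mul /Hmul /= add0r mul0r addr0. Qed.

Lemma Z2_to_Heis_inj : injective Z2_to_Heis.
Proof. by move=> [a b] [a' b'] [-> ->]. Qed.

Definition hgen (b : bool) : Heis := if b then ((1, 0), 0) else ((0, 1), 0).

Definition hword (u : seq letter) : Heis := (((na u)%:Z, (nb u)%:Z), (nab u)%:Z).

Lemma hword_cons b u : hword (Some b :: u) = Hmul (hgen b) (hword u).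
Proof.
by case: b; rewrite /hword /Hmul /na /nb /= -/(na u) -/(nb u); congr ((_, _), _); lia.
Qed.

(* Once the a-coordinate is 0, right multiplication by b^-1 no longer changes the
   central coordinate, so EraseB may interleave erasing b with reading c. *)
Definition hdelta (q : hstate) (l : option letter) : seq (hstate * Heis) :=
  match q, l with
  | Scan, Some (Some b) => [:: (Scan, hgen b)]
  | Scan, None => [:: (EraseA, Hone)]
  | EraseA, None => [:: (EraseA, ((-1, 0), 0)); (EraseB, Hone)]
  | EraseB, None => [:: (EraseB, ((0, -1), 0))]
  | EraseB, Some None => [:: (EraseB, ((0, 0), -1))]
  | _, _ => [::]
  end.

Definition heis_automaton : gautomaton Heis (option bool : finType) :=
  {| gstate := hstate : finType; gdelta := hdelta; ginit := Scan; gacc := [set EraseB] |}.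

Local Notation hrun := (@gcomp Heis Hmul _ heis_automaton).

Lemma eraseB_sound R w q : hrun EraseB R w q Hone ->
  exists j k : nat, w = nseq k ltrC /\ R = ((0, j%:Z), k%:Z).
Proof.
move Eq0: EraseB => q0; move Ey: Hone => y H; elim: H Eq0 Ey => {q0 R w q y}
  [q R | q R q1 m w q' y Hm _ IH | q R l q1 m w q' y Hm _ IH] Eq Ey; subst q.
- by exists 0%N, 0%N; rewrite -Ey.
- move: Hm IH; rewrite inE => /eqP[-> ->] /(_ erefl Ey)[j [k [-> E]]].
  exists j.+1, k; split => //; move: E; case: R => [[a b] c].
  by rewrite /Hmul /= => -[Ea Eb Ec]; congr ((_, _), _); lia.
- case: l Hm IH => [[]|] //; rewrite inE => /eqP[-> ->] /(_ erefl Ey)[j [k [-> E]]].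
  exists j, k.+1; split => //; move: E; case: R => [[a b] c].
  by rewrite /Hmul /= => -[Ea Eb Ec]; congr ((_, _), _); lia.
Qed.

Lemma eraseA_sound R w q : hrun EraseA R w q Hone ->
  exists i j k : nat, w = nseq k ltrC /\ R = ((i%:Z, j%:Z), k%:Z).
Proof.
move Eq0: EraseA => q0; move Ey: Hone => y H; elim: H Eq0 Ey => {q0 R w q y}
  [q R | q R q1 m w q' y Hm Hw IH | q R l q1 m w q' y Hm _ IH] Eq Ey; subst q.
- by exists 0%N, 0%N, 0%N; rewrite -Ey.
- move: Hm Hw IH; rewrite !inE => /orP[] /eqP[-> ->] => [_ | Hw _].
    case/(_ erefl Ey) => i [j [k [-> E]]].
    exists i.+1, j, k; split => //; move: E; case: R => [[a b] c].
    by rewrite /Hmul /= => -[Ea Eb Ec]; congr ((_, _), _); lia.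
  rewrite -Ey Hmulg1 in Hw; have [j [k [-> ->]]] := eraseB_sound Hw.
  by exists 0%N, j, k.
- by case: l Hm => [[]|].
Qed.

Lemma scan_sound R w q : hrun Scan R w q Hone ->
  exists u (i j k : nat),
    [/\ all isSome u, w = u ++ nseq k ltrC & Hmul R (hword u) = ((i%:Z, j%:Z), k%:Z)].
Proof.
move Eq0: Scan => q0; move Ey: Hone => y H; elim: H Eq0 Ey => {q0 R w q y}
  [q R | q R q1 m w q' y Hm Hw IH | q R l q1 m w q' y Hm _ IH] Eq Ey; subst q.
- by exists [::], 0%N, 0%N, 0%N; rewrite -Ey.
- move: Hm Hw; rewrite inE => /eqP[-> ->]; rewrite -Ey Hmulg1 => Hw.
  have [i [j [k [-> ->]]]] := eraseA_sound Hw.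
  by exists [::], i, j, k; rewrite Hmulg1.
- case: l Hm IH => [b|] //; rewrite inE => /eqP[-> ->] /(_ erefl Ey).
  case=> u [i [j [k [u_ab -> E]]]].
  by exists (Some b :: u), i, j, k; rewrite hword_cons HmulA.
Qed.

Lemma eraseB_complete (j k : nat) : hrun EraseB ((0, j%:Z), k%:Z) (nseq k ltrC) EraseB Hone.
Proof.
elim: j => [|j IH].
  elim: k => [|k IH]; first exact: gcomp_nil.
  apply: (gcomp_sym (A := heis_automaton) (q1 := EraseB) (m := ((0, 0), -1))); first by rewrite inE.
  by rewrite /Hmul /= mulr0 !addr0 -addn1 PoszD addrK.
apply: (gcomp_eps (A := heis_automaton) (q1 := EraseB) (m := ((0, -1), 0))); first by rewrite inE.
by rewrite /Hmul /= mul0r !addr0 -addn1 PoszD addrK.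
Qed.

Lemma eraseA_complete (i j k : nat) :
  hrun EraseA ((i%:Z, j%:Z), k%:Z) (nseq k ltrC) EraseB Hone.
Proof.
elim: i => [|i IH].
  apply: (gcomp_eps (A := heis_automaton) (q1 := EraseB) (m := Hone)); first by rewrite !inE eqxx orbT.
  by rewrite Hmulg1; apply: eraseB_complete.
apply: (gcomp_eps (A := heis_automaton) (q1 := EraseA) (m := ((-1, 0), 0))); first by rewrite !inE eqxx.
by rewrite /Hmul /= mulr0 !addr0 -addn1 PoszD addrK.
Qed.

Lemma scan_complete R u : all isSome u -> hrun Scan R u Scan (Hmul R (hword u)).
Proof.
elim: u R => [|[b|] u IH] R //= u_ab; first by rewrite Hmulg1; apply: gcomp_nil.
apply: (gcomp_sym (A := heis_automaton) (q1 := Scan) (m := hgen b)); first by rewrite inE.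
by rewrite hword_cons HmulA; apply: IH.
Qed.

Lemma Lsep_in_LG_Heis : in_LG Hmul Hone Lsep.
Proof.
exists heis_automaton => w; split.
  case=> u u_ab ->; exists EraseB; first by rewrite inE.
  apply: gcomp_cat (scan_complete Hone u_ab) _.
  apply: (gcomp_eps (A := heis_automaton) (q1 := EraseA) (m := Hone)); first by rewrite inE.
  by rewrite !Hmulg1 /Hmul /hword /= !add0r mul0r addr0; apply: eraseA_complete.
case=> q _ /scan_sound[u [i [j [k [u_ab -> E]]]]]; exists u => //.
by move: E; rewrite /Hmul /hword /= mul0r !add0r addr0 => -[_ _ [->]].
Qed.

End Heisenberg.

Theorem theorem3p10 :
  (forall (S : finType) (L : seq S -> Prop),
      in_LG Z2mul Z2one L -> in_LG Hmul Hone L) /\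
  (exists (S : finType) (L : seq S -> Prop),
      in_LG Hmul Hone L /\ ~ in_LG Z2mul Z2one L).
Proof.
split.
  by move=> S L; apply: in_LG_inj_morph Z2_to_HeisM Z2_to_Heis_inj _.
exists (option bool : finType), Lsep; split; first exact: Lsep_in_LG_Heis.
(* On int * int, Z2mul and Z2one are convertible to +%R and 0. *)
exact (@Lsep_notin_LG_zmod (int * int)%type).
Qed.
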